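(* Let $\{|a_i\rangle\}$ and $\{|b_j\rangle\}$ be orthonormal bases of finite-dimensional systems $A$ and $B$, $n=\min\{\dim A,\dim B\}$, and let $\tau_{AB}=\sum_{i,j=1}^n\tau_{ij}|a_i\rangle\langle a_j|\otimes|b_i\rangle\langle b_j|$ be a state (a maximally correlated state). Let $\sigma_{AB}=\sum_{i=1}^n\tau_{ii}|a_i\rangle\langle a_i|\otimes|b_i\rangle\langle b_i|$. Then, with all $l_1$-norms computed in the basis $\{|a_i\rangle\otimes|b_j\rangle\}$, $$\|\tau_{AB}-\sigma_{AB}\|_{l_1}=\min_{\xi\in\mathcal{PPT}}\|\tau_{AB}-\xi\|_{l_1}=\min_{\xi\in\mathcal{SEP}}\|\tau_{AB}-\xi\|_{l_1}.$$
   Context: For a matrix $X$ and an orthonormal basis $\{|e_k\rangle\}$, $\|X\|_{l_1}=\sum_{k,l}|\langle e_k|X|e_l\rangle|$ (basis-dependent). $\mathcal{SEP}$ is the set of separable states on $A\otimes B$, i.e. convex combinations of product states $\tau_A\otimes\sigma_B$; $\mathcal{PPT}$ is the set of states on $A\otimes B$ whose partial transpose is positive semidefinite. *)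

(* Complex scalars: an arbitrary numClosedFieldType C
   (e.g. R[i] for a real closed field R, or algC). *)
From mathcomp Require Import all_boot all_order all_algebra.
From mathcomp Require Export mxtens.
Set Implicit Arguments. Unset Strict Implicit. Unset Printing Implicit Defensive.
Import Order.TTheory GRing.Theory Num.Theory.
Local Open Scope ring_scope.

Section QDefs.
Context {C : numClosedFieldType}.

Definition adjmx m n (M : 'M[C]_(m, n)) : 'M[C]_(n, m) := map_mx Num.conj (M^T).

Definition psdmx n (A : 'M[C]_n) : Prop :=
  forall v : 'cV[C]_n, 0 <= (adjmx v *m A *m v) 0 0.

Definition density n (A : 'M[C]_n) : Prop := psdmx A /\ \tr A = 1.

Definition unitary n (U : 'M[C]_n) : Prop := U *m adjmx U = 1%:M.

Definition ketbra n (u v : 'cV[C]_n) : 'M[C]_n := u *m adjmx v.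

(* l1-norm in the orthonormal basis formed by the columns e_k of U:
   sum_{k,l} |<e_k| X |e_l>| *)
Definition l1norm_in n (U X : 'M[C]_n) : C :=
  \sum_(k < n) \sum_(l < n) `|(adjmx U *m X *m U) k l|.

(* partial transpose on B, w.r.t. the standard basis (index (i,k) of A⊗B is
   mxtens_index (i,k)):  <i k| X^Γ |j l> = <i l| X |j k> *)
Definition ptransB dA dB (X : 'M[C]_(dA * dB)) : 'M[C]_(dA * dB) :=
  \matrix_(p, q) X (mxtens_index ((mxtens_unindex p).1, (mxtens_unindex q).2))
                   (mxtens_index ((mxtens_unindex q).1, (mxtens_unindex p).2)).

Definition PPT dA dB (X : 'M[C]_(dA * dB)) : Prop :=
  density X /\ psdmx (ptransB X).

Definition SEP dA dB (X : 'M[C]_(dA * dB)) : Prop :=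
  exists (K : nat) (p : 'I_K -> C) (rA : 'I_K -> 'M[C]_dA) (rB : 'I_K -> 'M[C]_dB),
    [/\ forall k, 0 <= p k, \sum_(k < K) p k = 1,
        forall k, density (rA k), forall k, density (rB k) &
        X = \sum_(k < K) p k *: (rA k *t rB k)].

Definition idxA dA dB (i : 'I_(minn dA dB)) : 'I_dA := widen_ord (geq_minl dA dB) i.
Definition idxB dA dB (i : 'I_(minn dA dB)) : 'I_dB := widen_ord (geq_minr dA dB) i.

(* maximally correlated operator
   sum_{i,j<n} t_ij |a_i><a_j| ⊗ |b_i><b_j|, with a_i = col i UA, b_j = col j UB *)
Definition maxcorr dA dB (UA : 'M[C]_dA) (UB : 'M[C]_dB)
    (t : 'M[C]_(minn dA dB)) : 'M[C]_(dA * dB) :=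
  \sum_(i < minn dA dB) \sum_(j < minn dA dB)
     t i j *: (ketbra (col (idxA i) UA) (col (idxA j) UA)
               *t ketbra (col (idxB i) UB) (col (idxB j) UB)).

Definition maxcorr_diag dA dB (UA : 'M[C]_dA) (UB : 'M[C]_dB)
    (t : 'M[C]_(minn dA dB)) : 'M[C]_(dA * dB) :=
  \sum_(i < minn dA dB)
     t i i *: (ketbra (col (idxA i) UA) (col (idxA i) UA)
               *t ketbra (col (idxB i) UB) (col (idxB i) UB)).
End QDefs.

From mathcomp Require Import all_boot all_order all_algebra.
From mathcomp Require Import mxtens ring.
Import Order.TTheory GRing.Theory Num.Theory.
Local Open Scope ring_scope.
Set Implicit Arguments.
Unset Strict Implicit.
Unset Printing Implicit Defensive.

(* In the product basis {a_i (x) b_j}, i.e. after conjugation by W = UA (x) UB, the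
   state tau only has the entries t_ij at the positions (ii, jj), and sigma keeps the
   diagonal ones, so ||tau - sigma|| = sum_{i<>j} |t_ij|.  For any xi, as tau vanishes
   at the diagonal positions (ij, ij) with i <> j,
     ||tau - xi|| >= sum_{i<>j} (|t_ij - xi_{ii,jj}| + |xi_{ij,ij}|).
   PPT and separable states both satisfy 2 |xi_{ii,jj}| <= xi_{ij,ij} + xi_{ji,ji}:
   for a PPT state this is Cauchy-Schwarz for its positive partial transpose, which
   carries xi_{ii,jj} off the diagonal between the diagonal entries xi_{ij,ij} and
   xi_{ji,ji}; for a product state A (x) B it follows from the 2x2 minors of A and B
   and AM-GM, and it is preserved by convex combinations.  The triangle inequality
   then gives ||tau - xi|| >= ||tau - sigma||, and sigma, the mixture of the product
   states |a_i b_i><a_i b_i| with weights t_ii, is itself separable and PPT. *)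

Section ScalarInequalities.
Variable R : numDomainType.

Lemma sqr_le_mul_of_quadform_bound (x a b : R) : 0 <= x -> 0 <= a -> 0 <= b ->
  (forall s r, 0 <= s -> 0 <= r -> 2 * s * r * x <= s ^+ 2 * a + r ^+ 2 * b) ->
  x ^+ 2 <= a * b.
Proof.
(* Take [(s, r) = (x, a)], or [(b + 1, x)] when [a = 0]. *)
move=> x0 a0 b0 bound; have [a_eq0|a_gt0] := eqVneq a 0.
  have := bound (b + 1) x (addr_ge0 b0 ler01) x0.
  rewrite a_eq0 mul0r mulr0 add0r -subr_ge0.
  have -> : x ^+ 2 * b - 2 * (b + 1) * x * x = - (x ^+ 2 * (b + 2)) by ring.
  by rewrite oppr_ge0 pmulr_lle0 // ltr_wpDl // ltr0n.
have {}a_gt0 : 0 < a by rewrite lt_def a_gt0.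
have := bound x a x0 (ltW a_gt0); rewrite -subr_ge0.
have -> : x ^+ 2 * a + a ^+ 2 * b - 2 * x * a * x = a * (a * b - x ^+ 2) by ring.
by rewrite pmulr_rge0 // subr_ge0.
Qed.

Lemma cross_le_AMGM (x y a b c d : R) :
  0 <= x -> 0 <= y -> 0 <= a -> 0 <= b -> 0 <= c -> 0 <= d ->
  x ^+ 2 <= a * b -> y ^+ 2 <= c * d -> 2 * x * y <= a * d + b * c.
Proof.
move=> x0 y0 a0 b0 c0 d0 hx hy.
rewrite -(@ler_pXn2r _ 2) ?nnegrE ?addr_ge0 ?mulr_ge0 //.
have -> : (2 * x * y) ^+ 2 = (4 * x ^+ 2) * y ^+ 2 by ring.
apply: (@le_trans _ _ ((4 * (a * b)) * (c * d))).
  by rewrite ler_pM ?mulr_ge0 ?exprn_ge0 ?ler_wpM2l.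
rewrite -subr_ge0.
have -> : (a * d + b * c) ^+ 2 - 4 * (a * b) * (c * d) = (a * d - b * c) ^+ 2 by ring.
by rewrite -realEsqr realB ?ger0_real ?mulr_ge0.
Qed.

End ScalarInequalities.

Section Braket.
Variable C : numClosedFieldType.

Lemma adjmxE m n (M : 'M[C]_(m, n)) i j : adjmx M i j = (M j i)^*.
Proof. by rewrite !mxE. Qed.

Lemma adjmxK m n (M : 'M[C]_(m, n)) : adjmx (adjmx M) = M.
Proof. by apply/matrixP=> i j; rewrite !adjmxE conjCK. Qed.

Lemma adjmxM m n p (A : 'M[C]_(m, n)) (B : 'M[C]_(n, p)) :
  adjmx (A *m B) = adjmx B *m adjmx A.
Proof. by rewrite /adjmx trmx_mul map_mxM. Qed.

Lemma adjmxD m n (A B : 'M[C]_(m, n)) : adjmx (A + B) = adjmx A + adjmx B.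
Proof. by rewrite /adjmx linearD map_mxD. Qed.

Lemma adjmxZ m n a (A : 'M[C]_(m, n)) : adjmx (a *: A) = a^* *: adjmx A.
Proof. by apply/matrixP=> i j; rewrite !(adjmxE, mxE) rmorphM. Qed.

Lemma adjmx_tens m n p q (A : 'M[C]_(m, n)) (B : 'M[C]_(p, q)) :
  adjmx (A *t B) = adjmx A *t adjmx B.
Proof. by rewrite /adjmx trmx_tens map_mxT. Qed.

Lemma adjmx_delta m n (i : 'I_m) (j : 'I_n) :
  adjmx (delta_mx i j : 'M[C]_(m, n)) = delta_mx j i.
Proof. by rewrite /adjmx trmx_delta map_delta_mx. Qed.

Definition braket n (X : 'M[C]_n) (v w : 'cV[C]_n) : C := (adjmx v *m X *m w) 0 0.

Lemma braketZl n (X : 'M[C]_n) a v w : braket X (a *: v) w = a^* * braket X v w.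
Proof. by rewrite /braket adjmxZ -!scalemxAl mxE. Qed.

Lemma braketZr n (X : 'M[C]_n) a v w : braket X v (a *: w) = a * braket X v w.
Proof. by rewrite /braket -!scalemxAr mxE. Qed.

Lemma braketDl n (X : 'M[C]_n) u v w :
  braket X (u + v) w = braket X u w + braket X v w.
Proof. by rewrite /braket adjmxD !mulmxDl mxE. Qed.

Lemma braketDr n (X : 'M[C]_n) u v w :
  braket X u (v + w) = braket X u v + braket X u w.
Proof. by rewrite /braket mulmxDr mxE. Qed.

Lemma braketBl n (X : 'M[C]_n) u v w :
  braket X (u - v) w = braket X u w - braket X v w.
Proof. by rewrite -scaleN1r braketDl braketZl rmorphN1 mulN1r. Qed.

Lemma braketBr n (X : 'M[C]_n) u v w :
  braket X u (v - w) = braket X u v - braket X u w.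
Proof. by rewrite -scaleN1r braketDr braketZr mulN1r. Qed.

Lemma braket_delta n (X : 'M[C]_n) i j :
  braket X (delta_mx i 0) (delta_mx j 0) = X i j.
Proof. by rewrite /braket adjmx_delta -rowE -colE !mxE. Qed.

Lemma braketE n (X : 'M[C]_n) v w :
  braket X v w = \sum_r \sum_s (v r 0)^* * X r s * w s 0.
Proof.
rewrite /braket mxE; under eq_bigr do rewrite mxE big_distrl /=.
rewrite exchange_big /=; apply: eq_bigr => r _; apply: eq_bigr => s _.
by rewrite adjmxE.
Qed.

End Braket.

Section Psd.
Variable C : numClosedFieldType.

Lemma psd_braketC n (X : 'M[C]_n) v w : psdmx X -> braket X w v = (braket X v w)^*.
Proof.
(* The form is real at [v + w] and at [v + 'i w], so [z + z'] and ['i (z - z')] are real. *)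
move=> psdX; set z := braket X v w; set z' := braket X w v.
have realq u : (braket X u u)^* = braket X u u by apply/geC0_conj/psdX.
have := realq (v + w); have := realq (v + 'i *: w).
rewrite !(braketDl, braketDr, braketZl, braketZr) conjCi.
rewrite !(rmorphD, rmorphM, rmorphN) /= conjCi opprK !realq -/z -/z' (mulrCA 'i) !addrA.
move=> /addIr; rewrite -!addrA => /addrI.
rewrite !mulNr addrC -!mulrBr => /(mulfI (@neq0Ci C)) ei.
rewrite !addrA => /addIr; rewrite -!addrA => /addrI e1.
have : z^* - z' = ((z^* + z'^*) - (z + z') - ((z'^* - z^*) - (z - z'))) / 2.
  by field.
by rewrite e1 ei !subrr mul0r => /eqP; rewrite subr_eq0 eq_sym => /eqP.
Qed.

Lemma psd_braket_norm n (X : 'M[C]_n) v w : psdmx X ->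
  2 * `|braket X v w| <= braket X v v + braket X w w.
Proof.
move=> psdX; set z := braket X v w.
have [->|z_neq0] := eqVneq z 0; first by rewrite normr0 mulr0 addr_ge0 ?psdX.
have nz_neq0 : `|z| != 0 by rewrite normr_eq0.
pose mu := z^* / `|z|.
have muC : mu^* = z / `|z| by rewrite rmorphM fmorphV /= conj_normC conjCK.
have mu_z : mu * z = `|z| by rewrite mulrAC -normCKC expr2 mulfK.
have muC_zC : mu^* * z^* = `|z| by rewrite muC mulrAC -normCK expr2 mulfK.
have muC_mu : mu^* * mu = 1.
  by rewrite muC mulrACA -normCK -invfM -expr2 divff // expf_neq0.
(* [mu] has modulus one and turns [z] into [|z|]; expand positivity at [v - mu w]. *)
have := psdX (v - mu *: w); rewrite -/(braket X _ _).
rewrite !(braketBl, braketBr, braketZl, braketZr) (psd_braketC v w psdX) -/z.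
rewrite mulrBr mulrA muC_mu mul1r muC_zC mu_z.
have -> : braket X v v - `|z| - (`|z| - braket X w w) =
          braket X v v + braket X w w - 2 * `|z| by ring.
by rewrite subr_ge0.
Qed.

Lemma psd_diag_ge0 n (M : 'M[C]_n) i : psdmx M -> 0 <= M i i.
Proof. by move=> psdM; rewrite -braket_delta; apply: psdM. Qed.

Lemma psd_entry_sqr n (M : 'M[C]_n) i j : psdmx M ->
  `|M i j| ^+ 2 <= M i i * M j j.
Proof.
move=> psdM; apply: sqr_le_mul_of_quadform_bound; rewrite ?psd_diag_ge0 //.
move=> s r s0 r0.
have := psd_braket_norm (s *: delta_mx i 0) (r *: delta_mx j 0) psdM.
rewrite !(braketZl, braketZr) !braket_delta !geC0_conj // !normrM.
by rewrite (ger0_norm s0) (ger0_norm r0) !mulrA -!expr2.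
Qed.

Lemma psd_adj_mul n m (U : 'M[C]_(n, m)) X : psdmx X -> psdmx (adjmx U *m X *m U).
Proof. by move=> psdX v; have := psdX (U *m v); rewrite adjmxM !mulmxA. Qed.

Lemma psd_gram n m (Z : 'M[C]_(n, m)) : psdmx (Z *m adjmx Z).
Proof.
move=> v; have -> : adjmx v *m (Z *m adjmx Z) *m v =
                   adjmx (adjmx Z *m v) *m (adjmx Z *m v).
  by rewrite adjmxM adjmxK !mulmxA.
rewrite mxE.
by apply: sumr_ge0 => l _; rewrite adjmxE mulrC mul_conjC_ge0.
Qed.

Lemma braket_sumZ n K (c : 'I_K -> C) (M : 'I_K -> 'M[C]_n) v w :
  braket (\sum_k c k *: M k) v w = \sum_k c k * braket (M k) v w.
Proof.
rewrite /braket mulmx_sumr mulmx_suml summxE; apply: eq_bigr => k _.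
by rewrite -scalemxAr -scalemxAl mxE.
Qed.

Lemma psd_sumZ n K (c : 'I_K -> C) (M : 'I_K -> 'M[C]_n) :
  (forall k, 0 <= c k) -> (forall k, psdmx (M k)) -> psdmx (\sum_k c k *: M k).
Proof.
move=> c_ge0 psdM v; rewrite -/(braket _ _ _) braket_sumZ.
by apply: sumr_ge0 => k _; rewrite mulr_ge0 ?psdM.
Qed.

Lemma adj_mul_entry n (U X : 'M[C]_n) p q :
  (adjmx U *m X *m U) p q = braket X (col p U) (col q U).
Proof.
rewrite /braket !mxE; apply: eq_bigr => s _; rewrite !mxE; congr (_ * _).
by apply: eq_bigr => r _; rewrite !mxE.
Qed.

Lemma unitary_adjmx_mul n (U : 'M[C]_n) : unitary U -> adjmx U *m U = 1%:M.
Proof. exact: mulmx1C. Qed.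

Lemma adj_mul_ketbra_col n (U : 'M[C]_n) x y : unitary U ->
  adjmx U *m ketbra (col x U) (col y U) *m U = delta_mx x y.
Proof.
move=> unitU; rewrite /ketbra !colE adjmxM !mulmxA unitary_adjmx_mul // mul1mx.
by rewrite -!mulmxA unitary_adjmx_mul // mulmx1 adjmx_delta mul_delta_mx.
Qed.

Lemma mxtrace_ketbra_col n (U : 'M[C]_n) x y : unitary U ->
  \tr (ketbra (col x U) (col y U)) = (x == y)%:R.
Proof.
move=> unitU; rewrite /ketbra mxtrace_mulC trace_mx11 !colE adjmxM -mulmxA.
rewrite (mulmxA (adjmx U)) unitary_adjmx_mul // mul1mx adjmx_delta.
by rewrite mul_delta_mx_cond mulmxnE mxE eq_sym.
Qed.

Lemma density_ketbra_col n (U : 'M[C]_n) x : unitary U ->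
  density (ketbra (col x U) (col x U)).
Proof. by move=> unitU; split; [apply: psd_gram | rewrite mxtrace_ketbra_col ?eqxx]. Qed.

Lemma psd_ketbra_tens m n (u : 'cV[C]_m) (w : 'cV[C]_n) :
  psdmx (ketbra u u *t ketbra w w).
Proof. by rewrite /ketbra -tensmx_mul -adjmx_tens; apply: psd_gram. Qed.

End Psd.

Section EntrywiseNorm.
Variable R : numDomainType.

Lemma ler_sum_inj (I J : finType) (g : I -> J) (P : pred I) (Q : pred J) (F : J -> R) :
  injective g -> (forall j, 0 <= F j) -> (forall i, P i -> Q (g i)) ->
  \sum_(i | P i) F (g i) <= \sum_(j | Q j) F j.
Proof.
move=> g_inj F_ge0 PQ; set S := [set g i | i in P].
have -> : \sum_(i | P i) F (g i) = \sum_(j | Q j && (j \in S)) F j.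
  rewrite -(big_imset _ (in2W g_inj)) -/S; apply: eq_bigl => j.
  apply/idP/andP => [jS|[]//]; split=> //.
  by case/imsetP: jS => i Pi ->; apply: PQ.
by rewrite [leRHS](bigID [in S]) /= lerDl sumr_ge0.
Qed.

Definition mxl1 m n (M : 'M[R]_(m, n)) : R := \sum_i \sum_j `|M i j|.

Lemma mxl1D m n (A B : 'M[R]_(m, n)) : mxl1 (A + B) <= mxl1 A + mxl1 B.
Proof.
rewrite -big_split; apply: ler_sum => i _; rewrite -big_split; apply: ler_sum => j _.
by rewrite mxE ler_normD.
Qed.

Lemma mxl1Z m n a (A : 'M[R]_(m, n)) : mxl1 (a *: A) = `|a| * mxl1 A.
Proof.
rewrite /mxl1 mulr_sumr; apply: eq_bigr => i _; rewrite mulr_sumr.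
by apply: eq_bigr => j _; rewrite mxE normrM.
Qed.

Lemma mxl1_delta m n (i : 'I_m) (j : 'I_n) : mxl1 (delta_mx i j : 'M[R]_(m, n)) = 1.
Proof.
rewrite /mxl1 (bigD1 i) //= addrC big1 ?add0r => [|i' ne_i'i]; last first.
  by rewrite big1 // => j' _; rewrite mxE (negbTE ne_i'i) normr0.
rewrite (bigD1 j) //= addrC big1 ?add0r => [|j' ne_j'j]; last first.
  by rewrite mxE (negbTE ne_j'j) andbF normr0.
by rewrite mxE !eqxx normr1.
Qed.

Lemma mxl1_sum_le m n (I : finType) (P : pred I) (F : I -> 'M[R]_(m, n)) :
  mxl1 (\sum_(k | P k) F k) <= \sum_(k | P k) mxl1 (F k).
Proof.
apply: (big_ind2 (fun A r => mxl1 A <= r)) => [|A r B s leAr leBs|//].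
  by rewrite /mxl1 big1 // => i _; apply: big1 => j _; rewrite mxE normr0.
by apply: le_trans (mxl1D A B) _; apply: lerD.
Qed.

End EntrywiseNorm.

Lemma l1norm_inE (C : numClosedFieldType) n (U X : 'M[C]_n) :
  l1norm_in U X = mxl1 (adjmx U *m X *m U).
Proof. by []. Qed.

Section Tensor.
Variable C : numClosedFieldType.

Lemma sum_mxtens m n (F : 'I_(m * n) -> C) :
  \sum_r F r = \sum_a \sum_b F (mxtens_index (a, b)).
Proof.
rewrite pair_bigA /= (reindex (@mxtens_index m n)) /=; last first.
  by exists (@mxtens_unindex m n) => x _; rewrite (mxtens_indexK, mxtens_unindexK).
by apply: eq_bigr => -[a b].
Qed.

Lemma mxtrace_tens m n (A : 'M[C]_m) (B : 'M[C]_n) : \tr (A *t B) = \tr A * \tr B.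
Proof. by rewrite /mxtrace mulr_sum; apply: eq_bigr => k _; rewrite mxE. Qed.

Lemma delta_mx_tens m1 m2 n1 n2 (a : 'I_m1) (b : 'I_n1) (c : 'I_m2) (d : 'I_n2) :
  (delta_mx a b : 'M[C]_(m1, n1)) *t (delta_mx c d : 'M[C]_(m2, n2)) =
  delta_mx (mxtens_index (a, c)) (mxtens_index (b, d)).
Proof.
apply/matrixP=> i j.
case: (mxtens_indexP i) => i1 i2; case: (mxtens_indexP j) => j1 j2.
rewrite tensmxE !mxE !(inj_eq (can_inj (@mxtens_indexK _ _))) !xpair_eqE -natrM mulnb.
by rewrite andbACA.
Qed.

Lemma ptransB_tens dA dB (A : 'M[C]_dA) (B : 'M[C]_dB) : ptransB (A *t B) = A *t B^T.
Proof.
apply/matrixP=> p q.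
case: (mxtens_indexP p) => p1 p2; case: (mxtens_indexP q) => q1 q2.
by rewrite mxE !mxtens_indexK /= !tensmxE mxE.
Qed.

Lemma ptransB_sumZ dA dB K (c : 'I_K -> C) (M : 'I_K -> 'M[C]_(dA * dB)) :
  ptransB (\sum_k c k *: M k) = \sum_k c k *: ptransB (M k).
Proof. by apply/matrixP=> p q; rewrite mxE !summxE; apply: eq_bigr => k _; rewrite !mxE. Qed.

Lemma trmx_ketbra m (w : 'cV[C]_m) :
  (ketbra w w)^T = ketbra (map_mx Num.conj w) (map_mx Num.conj w).
Proof.
apply/matrixP=> i j; rewrite !mxE; apply: eq_bigr => k _.
by rewrite !mxE conjCK mulrC.
Qed.

End Tensor.

Section CrossBounded.
Variables (C : numClosedFieldType) (dA dB : nat).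
Local Notation n := (minn dA dB).

Definition prod_idx (i j : 'I_n) : 'I_(dA * dB) := mxtens_index (idxA i, idxB j).

Lemma prod_idx_eq i j k l : (prod_idx i j == prod_idx k l) = (i == k) && (j == l).
Proof. by rewrite (inj_eq (can_inj (@mxtens_indexK _ _))) xpair_eqE. Qed.

Definition cross_bounded (Y : 'M[C]_(dA * dB)) := forall i j,
  2 * `|Y (prod_idx i i) (prod_idx j j)| <=
  Y (prod_idx i j) (prod_idx i j) + Y (prod_idx j i) (prod_idx j i).

Lemma cross_bounded_sumZ K (c : 'I_K -> C) (Y : 'I_K -> 'M[C]_(dA * dB)) :
  (forall k, 0 <= c k) -> (forall k, cross_bounded (Y k)) ->
  cross_bounded (\sum_k c k *: Y k).
Proof.
move=> c_ge0 boundedY i j; rewrite !summxE -big_split /=.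
apply: (le_trans (ler_wpM2l (ler0n _ 2) (ler_norm_sum _ _ _))).
rewrite mulr_sumr; apply: ler_sum => k _.
rewrite !mxE normrM (ger0_norm (c_ge0 k)) mulrCA -mulrDr.
exact/ler_wpM2l/boundedY.
Qed.

Lemma cross_bounded_tens (A : 'M[C]_dA) (B : 'M[C]_dB) :
  psdmx A -> psdmx B -> cross_bounded (A *t B).
Proof.
move=> psdA psdB i j; rewrite !tensmxE normrM mulrA.
by apply: cross_le_AMGM; rewrite ?normr_ge0 ?psd_diag_ge0 ?psd_entry_sqr.
Qed.

Lemma sum_cross_bounded Y : cross_bounded Y ->
  \sum_(k : 'I_n * 'I_n | k.1 != k.2) `|Y (prod_idx k.1 k.1) (prod_idx k.2 k.2)| <=
  \sum_(k : 'I_n * 'I_n | k.1 != k.2) `|Y (prod_idx k.1 k.2) (prod_idx k.1 k.2)|.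
Proof.
move=> boundedY; rewrite -(@ler_pM2l _ 2) ?ltr0n // !mulr_sumr.
apply: le_trans (_ : _ <= \sum_(k : 'I_n * 'I_n | k.1 != k.2)
   (`|Y (prod_idx k.1 k.2) (prod_idx k.1 k.2)| +
    `|Y (prod_idx k.2 k.1) (prod_idx k.2 k.1)|)) _.
  apply: ler_sum => k _; apply: le_trans (boundedY k.1 k.2) _.
  rewrite -[leLHS]ger0_norm ?ler_normD //.
  by apply: le_trans (boundedY k.1 k.2); rewrite mulr_ge0.
have swapK : involutive (fun k : 'I_n * 'I_n => (k.2, k.1)) by case.
rewrite big_split /= [X in _ + X](reindex_inj (inv_inj swapK)) /=.
rewrite [X in _ + X](eq_bigl (fun k : 'I_n * 'I_n => k.1 != k.2)) => [|k]; last first.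
  by rewrite eq_sym.
by rewrite -big_split; apply: ler_sum => k _; rewrite /= mulr_natl mulr2n.
Qed.

Lemma mxl1_ge_cross (M : 'M[C]_(dA * dB)) :
  \sum_(k : 'I_n * 'I_n | k.1 != k.2)
     (`|M (prod_idx k.1 k.1) (prod_idx k.2 k.2)| +
      `|M (prod_idx k.1 k.2) (prod_idx k.1 k.2)|) <= mxl1 M.
Proof.
pose F (pq : 'I_(dA * dB) * 'I_(dA * dB)) := `|M pq.1 pq.2|.
have F_ge0 pq : 0 <= F pq by apply: normr_ge0.
rewrite big_split /= addrC /mxl1 pair_bigA /= [leRHS](bigID (fun pq => pq.1 == pq.2)) /=.
apply: lerD.
- apply: (ler_sum_inj (g := fun k => (prod_idx k.1 k.2, prod_idx k.1 k.2)) (F := F)) => //.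
  by move=> [a b] [c d] /(congr1 fst)/eqP; rewrite /= prod_idx_eq => /andP[/eqP-> /eqP->].
- apply: (ler_sum_inj (g := fun k => (prod_idx k.1 k.1, prod_idx k.2 k.2)) (F := F)) => //.
    move=> [a b] [c d] e; have /eqP := congr1 fst e; have /eqP := congr1 snd e.
    by rewrite /= !prod_idx_eq !andbb => /eqP-> /eqP->.
  by move=> k; rewrite /= prod_idx_eq andbb.
Qed.

End CrossBounded.

Section MaximallyCorrelated.
Variables (C : numClosedFieldType) (dA dB : nat) (UA : 'M[C]_dA) (UB : 'M[C]_dB).
Hypotheses (unitaryA : unitary UA) (unitaryB : unitary UB).
Variable t : 'M[C]_(minn dA dB).

Local Notation n := (minn dA dB).
Local Notation W := (UA *t UB).
(* The matrix of [X] in the product basis {a_i (x) b_j}. *)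
Local Notation rot X := (adjmx W *m X *m W).
Local Notation tau := (maxcorr UA UB t).
Local Notation sigma := (maxcorr_diag UA UB t).

Lemma rot_tens (A : 'M[C]_dA) (B : 'M[C]_dB) :
  rot (A *t B) = (adjmx UA *m A *m UA) *t (adjmx UB *m B *m UB).
Proof. by rewrite adjmx_tens !tensmx_mul. Qed.

Lemma rot_ketbra_tens i j k l :
  rot (ketbra (col (idxA i) UA) (col (idxA j) UA) *t
       ketbra (col (idxB k) UB) (col (idxB l) UB)) =
  delta_mx (prod_idx i k) (prod_idx j l).
Proof. by rewrite rot_tens !adj_mul_ketbra_col // delta_mx_tens. Qed.

Lemma rot_maxcorr :
  rot tau = \sum_i \sum_j t i j *: delta_mx (prod_idx i i) (prod_idx j j).
Proof.
rewrite mulmx_sumr mulmx_suml; apply: eq_bigr => i _.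
rewrite mulmx_sumr mulmx_suml; apply: eq_bigr => j _.
by rewrite -scalemxAr -scalemxAl rot_ketbra_tens.
Qed.

Lemma rot_maxcorr_diag :
  rot sigma = \sum_i t i i *: delta_mx (prod_idx i i) (prod_idx i i).
Proof.
rewrite mulmx_sumr mulmx_suml; apply: eq_bigr => i _.
by rewrite -scalemxAr -scalemxAl rot_ketbra_tens.
Qed.

Lemma rot_maxcorrE a b c d :
  rot tau (prod_idx a b) (prod_idx c d) = ((a == b) && (c == d))%:R * t a c.
Proof.
rewrite rot_maxcorr summxE (bigD1 a) //= addrC big1 ?add0r => [|i ne_ia]; last first.
  by rewrite summxE big1 // => j _; rewrite !mxE prod_idx_eq (eq_sym a) (negbTE ne_ia) mulr0.
rewrite summxE (bigD1 c) //= addrC big1 ?add0r => [|j ne_jc]; last first.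
  by rewrite !mxE !prod_idx_eq (eq_sym c) (negbTE ne_jc) !andbF mulr0.
by rewrite !mxE !prod_idx_eq !eqxx (eq_sym b) (eq_sym d) mulrC.
Qed.

Lemma rot_maxcorr_offdiag :
  rot (tau - sigma) = \sum_(k : 'I_n * 'I_n | k.1 != k.2)
                        t k.1 k.2 *: delta_mx (prod_idx k.1 k.1) (prod_idx k.2 k.2).
Proof.
rewrite mulmxBr mulmxBl rot_maxcorr rot_maxcorr_diag -sumrB.
rewrite (eq_bigr (fun i => \sum_(j | i != j)
                   t i j *: delta_mx (prod_idx i i) (prod_idx j j))) ?pair_big_dep //.
move=> i _; rewrite (bigD1 i) //= addrAC subrr add0r.
by apply: eq_bigl => j; rewrite eq_sym.
Qed.

Lemma l1_maxcorr_dephase :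
  l1norm_in W (tau - sigma) <= \sum_(k : 'I_n * 'I_n | k.1 != k.2) `|t k.1 k.2|.
Proof.
rewrite l1norm_inE rot_maxcorr_offdiag; apply: le_trans (mxl1_sum_le _ _) _.
by apply: ler_sum => k _; rewrite mxl1Z mxl1_delta mulr1.
Qed.

Lemma l1_maxcorr_ge xi :
  \sum_(k : 'I_n * 'I_n | k.1 != k.2)
     (`|t k.1 k.2 - rot xi (prod_idx k.1 k.1) (prod_idx k.2 k.2)| +
      `|rot xi (prod_idx k.1 k.2) (prod_idx k.1 k.2)|) <= l1norm_in W (tau - xi).
Proof.
rewrite l1norm_inE; apply: le_trans (mxl1_ge_cross _); apply: ler_sum => k ne_k.
have entryB (A B : 'M[C]_(dA * dB)) p q : (A - B) p q = A p q - B p q by rewrite !mxE.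
by rewrite mulmxBr mulmxBl !entryB !rot_maxcorrE !eqxx (negbTE ne_k) mul1r mul0r sub0r normrN.
Qed.

Lemma l1_maxcorr_dephase_le xi : cross_bounded (rot xi) ->
  l1norm_in W (tau - sigma) <= l1norm_in W (tau - xi).
Proof.
move=> boundedXi; apply: le_trans l1_maxcorr_dephase _.
apply: le_trans _ (l1_maxcorr_ge xi); rewrite big_split /=.
apply: le_trans (_ : _ <= \sum_(k : 'I_n * 'I_n | k.1 != k.2)
    (`|t k.1 k.2 - rot xi (prod_idx k.1 k.1) (prod_idx k.2 k.2)| +
     `|rot xi (prod_idx k.1 k.1) (prod_idx k.2 k.2)|)) _.
  apply: ler_sum => k _; set x := rot xi _ _.
  by have := ler_normD (t k.1 k.2 - x) x; rewrite subrK.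
by rewrite big_split lerD2l sum_cross_bounded.
Qed.

Definition ket_conjB (x : 'I_dA) (y : 'I_dB) : 'cV[C]_(dA * dB) :=
  col x UA *t map_mx Num.conj (col y UB).

Lemma rot_entry_ptransB xi a b c d :
  rot xi (mxtens_index (a, b)) (mxtens_index (c, d)) =
  braket (ptransB xi) (ket_conjB a d) (ket_conjB c b).
Proof.
rewrite adj_mul_entry !braketE !sum_mxtens.
under eq_bigr do under eq_bigr do rewrite sum_mxtens.
under [RHS]eq_bigr do under eq_bigr do rewrite sum_mxtens.
apply: eq_bigr => a' _.
under [RHS]eq_bigr do rewrite exchange_big /=.
rewrite [RHS]exchange_big /=.
under [RHS]eq_bigr do rewrite exchange_big /=.
apply: eq_bigr => b' _; apply: eq_bigr => c' _; apply: eq_bigr => d' _.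
rewrite !mxE !mxtens_indexK /= !rmorphM /= !conjCK; ring.
Qed.

Lemma cross_bounded_ptransB xi : psdmx (ptransB xi) -> cross_bounded (rot xi).
Proof. by move=> psdG i j; rewrite !rot_entry_ptransB; apply: psd_braket_norm. Qed.

Lemma cross_bounded_SEP xi : SEP xi -> cross_bounded (rot xi).
Proof.
move=> [K [p [rA [rB [p_ge0 _ densA densB ->]]]]].
rewrite mulmx_sumr mulmx_suml.
under eq_bigr do rewrite -scalemxAr -scalemxAl.
apply: cross_bounded_sumZ => // k; rewrite rot_tens.
by apply: cross_bounded_tens; apply: psd_adj_mul; [case: (densA k) | case: (densB k)].
Qed.

Lemma psd_maxcorr_coef_ge0 i : psdmx tau -> 0 <= t i i.
Proof.
move=> psd_tau; have := psd_diag_ge0 (prod_idx i i) (psd_adj_mul W psd_tau).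
by rewrite rot_maxcorrE !eqxx mul1r.
Qed.

Lemma mxtrace_maxcorr : \tr tau = \sum_i t i i.
Proof.
rewrite raddf_sum; apply: eq_bigr => i _; rewrite raddf_sum (bigD1 i) //= big1 ?addr0.
  by rewrite mxtraceZ mxtrace_tens !mxtrace_ketbra_col // !eqxx mulr1 mulr1.
move=> j ne_ji; rewrite mxtraceZ mxtrace_tens mxtrace_ketbra_col //.
by rewrite [idxA i == _](_ : _ = (i == j)) // eq_sym (negbTE ne_ji) mul0r mulr0.
Qed.

Lemma mxtrace_maxcorr_diag : \tr sigma = \sum_i t i i.
Proof.
rewrite raddf_sum; apply: eq_bigr => i _.
by rewrite /= mxtraceZ mxtrace_tens !mxtrace_ketbra_col // !eqxx mulr1 mulr1.
Qed.

Hypothesis density_tau : density tau.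

Let t_ge0 i : 0 <= t i i := psd_maxcorr_coef_ge0 i density_tau.1.

Lemma density_maxcorr_diag : density sigma.
Proof.
split; last by rewrite mxtrace_maxcorr_diag -mxtrace_maxcorr density_tau.2.
by apply: psd_sumZ => // i; apply: psd_ketbra_tens.
Qed.

Lemma PPT_maxcorr_diag : PPT sigma.
Proof.
split; first exact: density_maxcorr_diag.
rewrite ptransB_sumZ; apply: psd_sumZ => // i.
by rewrite ptransB_tens trmx_ketbra; apply: psd_ketbra_tens.
Qed.

Lemma SEP_maxcorr_diag : SEP sigma.
Proof.
exists n, (fun i => t i i), (fun i => ketbra (col (idxA i) UA) (col (idxA i) UA)),
  (fun i => ketbra (col (idxB i) UB) (col (idxB i) UB)).
split=> // [|i|i]; try exact: density_ketbra_col.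
by rewrite -mxtrace_maxcorr density_tau.2.
Qed.

End MaximallyCorrelated.

Unset Implicit Arguments.
Set Strict Implicit.

Theorem theorem6 (C : numClosedFieldType) (dA dB : nat)
    (UA : 'M[C]_dA) (UB : 'M[C]_dB) (t : 'M[C]_(minn dA dB)) :
  unitary UA -> unitary UB ->
  density (maxcorr UA UB t) ->
  let tau := maxcorr UA UB t in
  let sigma := maxcorr_diag UA UB t in
  let l1 := l1norm_in (UA *t UB) in
  [/\ PPT sigma, SEP sigma,
      forall xi : 'M[C]_(dA * dB), PPT xi -> l1 (tau - sigma) <= l1 (tau - xi) &
      forall xi : 'M[C]_(dA * dB), SEP xi -> l1 (tau - sigma) <= l1 (tau - xi)].
Proof.
move=> unitaryA unitaryB density_tau tau sigma l1; split.
- exact: PPT_maxcorr_diag.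
- exact: SEP_maxcorr_diag.
- move=> xi [_ psd_ptrans_xi]; apply: l1_maxcorr_dephase_le => //.
  exact: cross_bounded_ptransB.
- move=> xi sep_xi; apply: l1_maxcorr_dephase_le => //.
  exact: cross_bounded_SEP.
Qed.
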